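(* Let $(u_n)_{n\ge0}$ be the Tetranacci numbers, defined by $u_0=0$, $u_1=1$, $u_2=1$, $u_3=2$ and $u_{n+4}=u_{n+3}+u_{n+2}+u_{n+1}+u_n$ for $n\ge0$. For integers $n$ define $t_n=\tfrac12 u_nu_{n+2}$ if $n\ge0$ and $t_n=0$ if $n<0$. Then for every $n\ge1$, \[ \sum_{0\le k\le n}u_k^2=\frac13+\frac13\bigl(2t_{n}+t_{n-1}-t_{n-2}-t_{n-3}+5t_{n-4}+4t_{n-5}+t_{n-6}+t_{n-7}-t_{n-8}-t_{n-9}\bigr). \] *)

From mathcomp Require Import all_boot all_order all_algebra.
Set Implicit Arguments. Unset Strict Implicit. Unset Printing Implicit Defensive.
Import Order.TTheory GRing.Theory Num.Theory.
Local Open Scope ring_scope.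

Fixpoint tetra (n : nat) : nat :=
  match n with
  | 0 => 0
  | 1 => 1
  | 2 => 1
  | 3 => 2
  | S ((S ((S ((S m) as m1)) as m2)) as m3) =>
      tetra m3 + tetra m2 + tetra m1 + tetra m
  end%N.

Definition tt (n : int) : rat :=
  match n with
  | Posz m => ((tetra m * tetra m.+2)%N)%:R / 2
  | Negz _ => 0
  end.
Example tetra_check : map tetra (iota 0 8) = [:: 0; 1; 1; 2; 4; 8; 15; 29]%N.
Proof. by []. Qed.

From mathcomp Require Import all_boot all_order all_algebra.
From mathcomp Require Import ring zify.
Import Order.TTheory GRing.Theory Num.Theory.
Local Open Scope ring_scope.

(* For n >= 9 every index of t in the bracket is nonnegative, and passing from
   n to n + 1 changes the bracket by exactly 6 u_{n+1}^2: after eliminating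
   u_{n+4}, ..., u_{n+12} with the recurrence this is a polynomial identity in
   u_n, ..., u_{n+3}, valid in any commutative ring.  Induction from n = 9
   gives the formula; the cases n <= 9, where the truncation t_k = 0 for k < 0
   enters, are checked by computation. *)

Lemma tetra_rec n : tetra n.+4 = (tetra n.+3 + tetra n.+2 + tetra n.+1 + tetra n)%N.
Proof. by []. Qed.

Section TetranacciLike.
Variables (R : comPzRingType) (a : nat -> R).
Hypothesis a_rec : forall n, a n.+4 = a n.+3 + a n.+2 + a n.+1 + a n.

Definition tetra_sq_combination (m : nat) : R :=
  let t k := a (k + m) * a (k + m).+2 in
  2 * t 9 + t 8 - t 7 - t 6 + 5 * t 5 + 4 * t 4 + t 3 + t 2 - t 1 - t 0.

Lemma tetra_sq_combinationS m :
  tetra_sq_combination m.+1 = tetra_sq_combination m + 6 * a (10 + m) ^+ 2.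
Proof. by rewrite /tetra_sq_combination /= !(addSn, addnS) add0n !a_rec; ring. Qed.

End TetranacciLike.

Arguments tetra_sq_combination {R}.

Definition tetra_sq_sum_closed (n : nat) : rat :=
  1 / 3 + 1 / 3 * (2 * tt n + tt (n%:Z - 1) - tt (n%:Z - 2) - tt (n%:Z - 3)
      + 5 * tt (n%:Z - 4) + 4 * tt (n%:Z - 5) + tt (n%:Z - 6) + tt (n%:Z - 7)
      - tt (n%:Z - 8) - tt (n%:Z - 9)).

Lemma tt_addKn (m k : nat) : tt ((k + m)%N%:Z - k%:R) = tt m.
Proof. by rewrite natz subzn ?leq_addr // addKn. Qed.

Lemma tetra_sq_sum_closed_add9 m :
  tetra_sq_sum_closed (9 + m) =
  1 / 3 + 1 / 6 * tetra_sq_combination (fun n => (tetra n)%:R) m.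
Proof.
rewrite /tetra_sq_sum_closed (tt_addKn (8 + m) 1) (tt_addKn (7 + m) 2)
  (tt_addKn (6 + m) 3) (tt_addKn (5 + m) 4) (tt_addKn (4 + m) 5)
  (tt_addKn (3 + m) 6) (tt_addKn (2 + m) 7) (tt_addKn (1 + m) 8)
  (tt_addKn (0 + m) 9).
rewrite /tetra_sq_combination /tt !natrM.
by field.
Qed.

Lemma tetra_sq_sum_closedS m :
  tetra_sq_sum_closed (9 + m).+1 =
  tetra_sq_sum_closed (9 + m) + ((tetra (9 + m).+1) ^ 2)%N%:R.
Proof.
have tetra_rat_rec n : (tetra n.+4)%:R =
    (tetra n.+3)%:R + (tetra n.+2)%:R + (tetra n.+1)%:R + (tetra n)%:R :> rat.
  by rewrite tetra_rec !natrD.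
rewrite (tetra_sq_sum_closed_add9 m.+1) (tetra_sq_combinationS _ _ tetra_rat_rec).
rewrite tetra_sq_sum_closed_add9 natrX.
by field.
Qed.

Lemma tetra_sq_sum_small n : (n < 9)%N ->
  \sum_(0 <= k < n.+2) ((tetra k) ^ 2)%N%:R = tetra_sq_sum_closed n.+1.
Proof.
case: n => [|[|[|[|[|[|[|[|[|n]]]]]]]]] n_lt9; last by exfalso; lia.
all: rewrite /tetra_sq_sum_closed big_mkord !big_ord_recr big_ord0 /tt /=.
all: by field.
Qed.

Lemma tetra_sq_sum_add9 m :
  \sum_(0 <= k < (9 + m).+1) ((tetra k) ^ 2)%N%:R = tetra_sq_sum_closed (9 + m).
Proof.
elim: m => [|m IHm]; first exact: tetra_sq_sum_small.
by rewrite addnS big_nat_recr //= IHm tetra_sq_sum_closedS.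
Qed.

Theorem mainTheorem1 (n : nat) (hn : (1 <= n)%N) :
  (\sum_(0 <= k < n.+1) ((tetra k) ^ 2)%N%:R : rat) =
  1 / 3 + 1 / 3 * (2 * tt n + tt (n%:Z - 1) - tt (n%:Z - 2) - tt (n%:Z - 3)
      + 5 * tt (n%:Z - 4) + 4 * tt (n%:Z - 5) + tt (n%:Z - 6) + tt (n%:Z - 7)
      - tt (n%:Z - 8) - tt (n%:Z - 9)).
Proof.
rewrite -/(tetra_sq_sum_closed n).
have [n_le9 | n_gt9] := leqP n 9.
  by case: n hn n_le9 => // n _; exact: tetra_sq_sum_small.
by rewrite -(subnKC (ltnW n_gt9)); exact: tetra_sq_sum_add9.
Qed.
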